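(* If two proper metric spaces $(X,d_X)$ and $(Y,d_Y)$ are coarsely equivalent, then their coarse Freudenthal coronas $CF(X)\setminus X$ and $CF(Y)\setminus Y$ are homeomorphic.
   Context: A map $f:X\to Y$ between metric spaces is coarse if $f^{-1}(K)$ is bounded for every bounded $K\subset Y$, and large scale continuous if for each $m\ge0$ there is $M>0$ with $d_X(x,y)<m\Rightarrow d_Y(f(x),f(y))<M$. Maps $f,g:X\to Y$ are close if $\sup_x d_Y(f(x),g(x))<\infty$. $X$ and $Y$ are coarsely equivalent if there are coarse, large scale continuous maps $f:X\to Y$, $g:Y\to X$ with $g\circ f$ close to $\mathrm{id}_X$ and $f\circ g$ close to $\mathrm{id}_Y$ (the maps need not be continuous). A glacial scale on $X$ is a sequence $\mathcal S=\{(K_i,n_i)\}_{i\ge1}$, $K_i$ bounded subsets, $n_i$ natural numbers, such that for every bounded $K$ and $r>0$ there is $i$ with $K\subset K_i$, $n_i>r$; an $\mathcal S$-chain is a finite sequence $x_1,\dots,x_n$ with, for each $i\le n-1$, some $m$ such that $x_i,x_{i+1}\notin K_m$ and $d(x_i,x_{i+1})\le n_m$; $f:X\to\mathbb R$ is glacially oscillating if for every $\epsilon>0$ there is a glacial scale $\mathcal S$ with $|f(x_1)-f(x_n)|<\epsilon$ for all $\mathcal S$-chains. The coarse Freudenthal compactification $CF(X)$ of a proper metric space $X$ is the compactification induced by all continuous glacially oscillating functions $X\to[0,1]$ (each such function extends continuously over $CF(X)$, and restrictions to $X$ of continuous functions on $CF(X)$ are glacially oscillating). *)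

From HB Require Import structures.
From mathcomp Require Import all_boot all_order all_algebra.
From mathcomp Require Import all_classical all_reals all_analysis.
Set Implicit Arguments. Unset Strict Implicit. Unset Printing Implicit Defensive.
Import Order.TTheory GRing.Theory Num.Theory.
Import numFieldTopology.Exports numFieldNormedType.Exports.
Local Open Scope classical_set_scope.
Local Open Scope ring_scope.

Section coarse.
Variable R : realType.

Definition mbounded (X : metricType R) (K : set X) : Prop :=
  exists r : R, forall x y, K x -> K y -> mdist x y <= r.

Definition proper_metric (X : metricType R) : Prop :=
  forall (x : X) (r : R), compact [set y | mdist x y <= r].

Definition coarse_map (X Y : metricType R) (f : X -> Y) : Prop :=
  forall K : set Y, mbounded K -> mbounded (f @^-1` K).

Definition ls_continuous (X Y : metricType R) (f : X -> Y) : Prop :=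
  forall m : R, 0 <= m -> exists2 M : R, 0 < M &
    forall x y : X, mdist x y < m -> mdist (f x) (f y) < M.

Definition close_maps (X Y : metricType R) (f g : X -> Y) : Prop :=
  exists C : R, forall x, mdist (f x) (g x) <= C.

Definition coarsely_equivalent (X Y : metricType R) : Prop :=
  exists (f : X -> Y) (g : Y -> X),
    [/\ coarse_map f, ls_continuous f, coarse_map g & ls_continuous g] /\
    close_maps (g \o f) idfun /\ close_maps (f \o g) idfun.

(* A glacial scale: a sequence (K_i, n_i)_{i >= 1} (indexed here from 0). *)
Definition glacial_scale (X : metricType R) (K : nat -> set X) (n : nat -> nat)
  : Prop :=
  (forall i, mbounded (K i)) /\
  forall (B : set X) (r : R), mbounded B -> 0 < r ->
    exists i, B `<=` K i /\ r < (n i)%:R.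

Definition scale_step (X : metricType R) (K : nat -> set X) (n : nat -> nat)
  (x y : X) : Prop :=
  exists m, ~ K m x /\ ~ K m y /\ mdist x y <= (n m)%:R.

(* The sequence x :: s is an S-chain. *)
Fixpoint scale_chain (X : metricType R) (K : nat -> set X) (n : nat -> nat)
  (x : X) (s : seq X) : Prop :=
  match s with
  | [::] => True
  | y :: s' => scale_step K n x y /\ scale_chain K n y s'
  end.

Definition glacially_oscillating (X : metricType R) (f : X -> R) : Prop :=
  forall eps : R, 0 < eps -> exists (K : nat -> set X) (n : nat -> nat),
    glacial_scale K n /\
    forall (x : X) (s : seq X), scale_chain K n x s ->
      `|f x - f (last x s)| < eps.

Definition cgo_fun (X : metricType R) (f : X -> R) : Prop :=
  continuous f /\ (forall x, 0 <= f x <= 1) /\ glacially_oscillating f.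

Definition CGO (X : metricType R) := {f : X -> R | cgo_fun f}.

Definition cf_embed (X : metricType R) (x : X) : {ptws CGO X -> R} :=
  fun f => proj1_sig f x.

Definition CF (X : metricType R) : set {ptws CGO X -> R} :=
  closure (range (@cf_embed X)).

Definition CF_corona (X : metricType R) : set {ptws CGO X -> R} :=
  @CF X `\` range (@cf_embed X).

End coarse.
Arguments CF {R} X.
Arguments CF_corona {R} X.

Definition homeomorphic_sets (T U : topologicalType) (A : set T) (B : set U)
  : Prop :=
  exists (f : T -> U) (g : U -> T),
    [/\ f @` A `<=` B, g @` B `<=` A,
        {in A, cancel f g} & {in B, cancel g f}] /\
    {within A, continuous f} /\ {within B, continuous g}.

From HB Require Import structures.
From mathcomp Require Import all_boot all_order all_algebra.
From mathcomp Require Import all_classical all_reals all_analysis.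
From mathcomp Require Import lra.
Import numFieldTopology.Exports numFieldNormedType.Exports.
Import Order.TTheory GRing.Theory Num.Theory.
Local Open Scope classical_set_scope.
Local Open Scope ring_scope.
Set Implicit Arguments. Unset Strict Implicit.

(* Call two functions a, b : X -> R asymptotic when, for every e > 0, they
   differ by at least e only on a bounded set.  A corona point p of CF(X) is a
   limit of evaluations at points of X leaving every bounded set, so it takes
   the same value on asymptotic functions of CGO(X) (the continuous glacially
   oscillating functions X -> [0,1]).

   Let f : X -> Y be coarse and large scale continuous.  For phi in CGO(Y),
   phi \o f is glacially oscillating, and asymptotic to a continuous function:
   its 1-Lipschitz upper envelope x |-> sup_y (phi (f y) - d(x, y)).  Choosing
   such a pullback H phi in CGO(X) for every phi, the map p |-> p \o H is
   continuous for the product topologies and sends the corona of X into the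
   corona of Y.  If g is a coarse inverse of f, the maps built from f and g
   are inverse to each other on the coronas, because a glacially oscillating
   function is asymptotic to its composite with a coarse map close to the
   identity. *)

Section bounded_sets.
Variables (R : realType) (X : metricType R).
Implicit Types (A B : set X).

Lemma mbounded_ballP (z : X) A :
  mbounded A <-> exists r : R, forall x, A x -> mdist z x <= r.
Proof.
split=> [[r Hr]|[r Hr]]; last first.
  exists (r + r) => x y Ax Ay; apply: (le_trans (metric_triangle x z y)).
  by rewrite metric_sym; apply: lerD; apply: Hr.
have [[a Aa]|A0] := pselect (exists a, A a); last first.
  by exists 0 => x Ax; exfalso; apply: A0; exists x.
exists (mdist z a + r) => x Ax.
by apply: (le_trans (metric_triangle z a x)); rewrite lerD2l Hr.
Qed.

Lemma mbounded0 : mbounded (@set0 X).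
Proof. by exists 0. Qed.

Lemma mboundedS A B : A `<=` B -> mbounded B -> mbounded A.
Proof. by move=> AB [r Hr]; exists r => x y /AB Ax /AB Ay; apply: Hr. Qed.

Lemma mboundedU A B : mbounded A -> mbounded B -> mbounded (A `|` B).
Proof.
move=> bA bB; have [[z _]|AB0] := pselect (exists z, (A `|` B) z); last first.
  by exists 0 => x y ABx; exfalso; apply: AB0; exists x.
have [rA HA] := (mbounded_ballP z A).1 bA.
have [rB HB] := (mbounded_ballP z B).1 bB.
apply/(mbounded_ballP z); exists (Num.max rA rB) => x [/HA|/HB] h;
  by rewrite le_max h ?orbT.
Qed.

Lemma mbounded_thicken A (r : R) :
  mbounded A -> mbounded [set x | exists2 y, A y & mdist x y <= r].
Proof.
move=> [b Hb]; exists (r + b + r) => x x' [y Ay dxy] [y' Ay' dxy'].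
have := metric_triangle x y x'; have := metric_triangle y y' x'.
have := Hb _ _ Ay Ay'; rewrite (metric_sym y' x'); lra.
Qed.

End bounded_sets.

Section coarse_maps.
Variable R : realType.

Lemma coarse_comp (X Y Z : metricType R) (f : X -> Y) (g : Y -> Z) :
  coarse_map f -> coarse_map g -> coarse_map (g \o f).
Proof. by move=> cf cg K bK; exact: (cf _ (cg _ bK)). Qed.

Lemma ls_continuous_bounded (X Y : metricType R) (f : X -> Y) (B : set X) :
  ls_continuous f -> mbounded B -> mbounded (f @` B).
Proof.
move=> lf [b Hb]; have b1 : 0 <= Num.max b 0 + 1.
  by rewrite addr_ge0 // le_max lexx orbT.
have [M M0 HM] := lf _ b1; exists M => _ _ [x Bx <-] [y By <-].
apply/ltW/HM; apply: (le_lt_trans (Hb _ _ Bx By)).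
have : b <= Num.max b 0 by rewrite le_max lexx.
lra.
Qed.

End coarse_maps.

Section asymptotic_functions.
Variable R : realType.

(* [a] and [b] are asymptotic if they differ by at least [e] only on a
   bounded set, for every [e > 0]; corona points do not separate them. *)
Definition asymptotic (X : metricType R) (a b : X -> R) : Prop :=
  forall e : R, 0 < e -> mbounded [set x | e <= `|a x - b x|].

Lemma asymptotic_trans (X : metricType R) (a b c : X -> R) :
  asymptotic a b -> asymptotic b c -> asymptotic a c.
Proof.
move=> ab bc e e0; have e2 : 0 < e / 2 by rewrite divr_gt0.
apply: mboundedS (mboundedU (ab _ e2) (bc _ e2)) => x /= eac.
have [|lt_ab] := leP (e / 2) `|a x - b x|; first by left.
right; rewrite leNgt; apply/negP => lt_bc.
have := ler_distD (b x) (a x) (c x); lra.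
Qed.

Lemma asymptotic_comp (X Y : metricType R) (f : X -> Y) (a b : Y -> R) :
  coarse_map f -> asymptotic a b -> asymptotic (a \o f) (b \o f).
Proof. by move=> cf ab e e0; exact: (cf _ (ab _ e0)). Qed.

Lemma asymptotic_cvg (X : metricType R) (F : set_system X) (a b : X -> R)
    (l : R) :
  Filter F -> (forall B, mbounded B -> F (~` B)) ->
  asymptotic a b -> a @ F --> l -> b @ F --> l.
Proof.
move=> FF Fcob ab /cvgrPdist_lt al; apply/cvgrPdist_lt => e e0.
have e2 : 0 < e / 2 by rewrite divr_gt0.
apply: filterS2 (al _ e2) (Fcob _ (ab _ e2)) => x lal /negP.
rewrite -ltNge => lab; have := ler_distD (a x) l (b x); lra.
Qed.

End asymptotic_functions.

Section glacial_oscillation.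
Variable R : realType.

Lemma scale_chain_shrink (X : metricType R) (K K' : nat -> set X)
    (n : nat -> nat) (x : X) (s : seq X) :
  (forall m, K m `<=` K' m) -> scale_chain K' n x s -> scale_chain K n x s.
Proof.
move=> KK'; elim: s x => [//|y s IH] x /= [[m [Kx [Ky dxy]]] chain].
by split; [exists m; split; [move/KK'|split; [move/KK'|]]|exact: IH].
Qed.

Lemma scale_chain_ends (X : metricType R) (K : nat -> set X) (n : nat -> nat)
    (x y : X) (s : seq X) :
  scale_chain K n x (y :: s) ->
  (exists m, ~ K m x) /\ (exists m, ~ K m (last y s)).
Proof.
elim: s x y => [|z s IH] x y /=.
  by move=> [[m [Kx [Ky _]]] _]; split; exists m.
move=> [[m [Kx _]] chain]; split; first by exists m.
by have [_] := IH _ _ chain.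
Qed.

Lemma ball_glacial_scale (X : metricType R) (z : X) :
  glacial_scale (fun i => [set y | mdist z y <= i%:R]) id.
Proof.
split=> [i|B r bB r0]; first by apply/(mbounded_ballP z); exists i%:R.
have [rB HB] := (mbounded_ballP z B).1 bB.
have m0 : 0 <= Num.max rB r by rewrite le_max (ltW r0) orbT.
have bnd := archi_boundP m0; exists (Num.bound (Num.max rB r)); split.
  move=> x Bx /=; apply: (le_trans (HB _ Bx)); apply/ltW/(le_lt_trans _ bnd).
  by rewrite le_max lexx.
by apply: le_lt_trans bnd; rewrite le_max lexx orbT.
Qed.

Lemma glacially_oscillating_cst (X : metricType R) (z : X) (c : R) :
  glacially_oscillating (fun _ : X => c).
Proof.
move=> e e0; exists (fun i => [set y | mdist z y <= i%:R]), id.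
by split=> [|x s _]; [exact: ball_glacial_scale|rewrite subrr normr0].
Qed.

(* Glacial oscillation only depends on the asymptotic class of a function:
   the bounded set where [h] and [u] differ is absorbed into the scale. *)
Lemma glacially_oscillating_asymptotic (X : metricType R) (u h : X -> R) :
  glacially_oscillating u -> asymptotic h u -> glacially_oscillating h.
Proof.
move=> gu hu e e0; have e3 : 0 < e / 3 by rewrite divr_gt0.
have [K [n [[Kb Ks] Kc]]] := gu _ e3.
pose B := [set x | e / 3 <= `|h x - u x|].
exists (fun i => K i `|` B), n; split.
  split=> [i|B' r bB' r0]; first exact: mboundedU (Kb i) (hu _ e3).
  by have [i [B'K nr]] := Ks _ _ bB' r0; exists i; split => // x /B'K; left.
move=> x [|y s] chain /=; first by rewrite subrr normr0.
have [[m1 KBx] [m2 KBl]] := scale_chain_ends chain.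
have /Kc/= ux := scale_chain_shrink (fun m z Kz => or_introl Kz) chain.
have /negP : ~ B x by move=> Bx; apply: KBx; right.
have /negP : ~ B (last y s) by move=> Bl; apply: KBl; right.
rewrite /B /= -!ltNge distrC => hl hx.
have := ler_distD (u x) (h x) (h (last y s)).
have := ler_distD (u (last y s)) (u x) (h (last y s)); lra.
Qed.

(* If [k] is coarse and close to the identity, then [psi \o k] is asymptotic
   to [psi] for glacially oscillating [psi]: off a large [K i], the pair
   [x, k x] is a one-step chain. *)
Lemma close_asymptotic (X : metricType R) (psi : X -> R) (k : X -> X) :
  glacially_oscillating psi -> coarse_map k ->
  close_maps k idfun -> asymptotic (psi \o k) psi.
Proof.
move=> gpsi ck [C HC] e e0; have [K [n [[Kb Ks] Kc]]] := gpsi _ e0.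
have C1 : 0 < Num.max C 0 + 1 by rewrite ltr_wpDl // le_max lexx orbT.
have [i [_ Cn]] := Ks _ _ (mbounded0 X) C1.
apply: mboundedS (mboundedU (Kb i) (ck _ (Kb i))) => x /= ex.
have [|nKx] := pselect (K i x); first by left.
have [|nKkx] := pselect (K i (k x)); first by right.
have chain : scale_chain K n x [:: k x].
  split=> //; exists i; do 2!split=> //.
  rewrite metric_sym; apply: (le_trans (HC x)); apply/ltW/(lt_trans _ Cn).
  have : C <= Num.max C 0 by rewrite le_max lexx.
  lra.
by have := Kc _ _ chain; rewrite /= distrC ltNge ex.
Qed.

End glacial_oscillation.

Section gauge.
Variables (R : realType) (X Y : metricType R) (f : X -> Y).

(* [ls_gauge N] is the largest integer [k <= N] such that points at distance
   at most [k] are sent at distance at most [N]; it converts the scale of a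
   glacial scale on [Y] into the integers of a scale on [X]. *)
Definition ls_gauge (N : nat) : nat :=
  \max_(k < N.+1 | `[< forall x y : X,
      mdist x y <= k%:R -> mdist (f x) (f y) <= N%:R >]) k.

Lemma ls_gaugeP (N : nat) (x y : X) :
  mdist x y <= (ls_gauge N)%:R -> mdist (f x) (f y) <= N%:R.
Proof.
pose P (k : nat) :=
  forall x y : X, mdist x y <= k%:R -> mdist (f x) (f y) <= N%:R.
suff : P (ls_gauge N) by apply.
apply: (big_ind P) => [x' y' d0|a b Pa Pb|k /asboolP //].
- have -> : x' = y' by apply/mdist_positivity/le_anti; rewrite d0 mdist_ge0.
  by rewrite mdistxx.
- by rewrite /maxn; case: ifP.
Qed.

Lemma ls_gauge_unbounded : ls_continuous f ->
  forall r : R, 0 <= r -> exists M : R, forall N : nat,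
    M <= N%:R -> r < (ls_gauge N)%:R.
Proof.
move=> lf r r0; pose k := Num.bound r; have rk : r < k%:R := archi_boundP r0.
have k1 : 0 <= k%:R + 1 :> R by rewrite addr_ge0.
have [M M0 HM] := lf _ k1; exists (Num.max M k%:R) => N MN.
apply: (lt_le_trans rk); rewrite ler_nat.
have kN : (k < N.+1)%N.
  by rewrite ltnS -(ler_nat R); apply: le_trans MN; rewrite le_max lexx orbT.
apply: (@leq_bigmax_cond _ _ (fun i : 'I_N.+1 => nat_of_ord i) (Ordinal kN)).
apply/asboolP => x y dxy; apply/ltW/(lt_le_trans (HM _ _ _)).
  by apply: (le_lt_trans dxy); rewrite ltrDl.
by apply: le_trans MN; rewrite le_max lexx.
Qed.

End gauge.

(* Composition with a coarse, large scale continuous map preserves glacial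
   oscillation: pull the sets of a scale back along [f] and the integers
   back through the gauge. *)
Lemma glacially_oscillating_comp (R : realType) (X Y : metricType R)
    (f : X -> Y) (phi : Y -> R) :
  coarse_map f -> ls_continuous f -> glacially_oscillating phi ->
  glacially_oscillating (phi \o f).
Proof.
move=> cf lf gphi e e0; have [K [n [[Kb Ks] Kc]]] := gphi _ e0.
exists (fun j => f @^-1` K j), (ls_gauge f \o n); split.
  split=> [j|B r bB r0]; first exact: cf.
  have [M HM] := ls_gauge_unbounded lf (ltW r0).
  have M1 : 0 < Num.max M 1 by rewrite lt_max ltr01 orbT.
  have [j [fBK Mn]] := Ks _ _ (ls_continuous_bounded lf bB) M1.
  exists j; split; first by move=> x Bx; apply: fBK; exists x.
  by apply: HM; apply/ltW/(le_lt_trans _ Mn); rewrite le_max lexx.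
move=> x s chain; rewrite /= -last_map; apply: Kc.
elim: s x chain => [//|y s IH] x /= [[m [Kx [Ky dxy]]] chain].
by split; [exists m; do 2!split=> //; apply: ls_gaugeP|exact: IH].
Qed.

Section lipschitz_envelope.
Variables (R : realType) (X : metricType R).

Lemma lipschitz_continuous (h : X -> R) :
  (forall x y, `|h x - h y| <= mdist x y) -> continuous h.
Proof.
move=> hlip x; apply/cvgrPdist_lt => e e0; near=> t.
have : ball x e t by near: t; exact: nbhsx_ballx.
by rewrite ballEmdist /= => xt; exact: le_lt_trans (hlip x t) xt.
Unshelve. all: by end_near.
Qed.

Variable u : X -> R.
Hypothesis u01 : forall x, 0 <= u x <= 1.

(* The least 1-Lipschitz function above [u]: x |-> sup_y (u y - d(x, y)). *)
Definition envelope (x : X) : R := sup (range (fun y => u y - mdist x y)).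

Lemma envelope_has_sup (x : X) : has_sup (range (fun y => u y - mdist x y)).
Proof.
split; first by exists (u x - mdist x x), x.
exists 1 => _ [y _ <-]; have := mdist_ge0 x y; have /andP[_ uy1] := u01 y; lra.
Qed.

Lemma envelope_ge (x : X) : u x <= envelope x.
Proof.
have := sup_upper_bound (envelope_has_sup x) (ex_intro2 _ _ x I erefl).
by rewrite mdistxx subr0.
Qed.

Lemma envelope_le (x : X) (c : R) :
  (forall y, u y - mdist x y <= c) -> envelope x <= c.
Proof.
by move=> uc; apply: ge_sup; [case: (envelope_has_sup x)|move=> _ [y _ <-]].
Qed.

Lemma envelope_01 (x : X) : 0 <= envelope x <= 1.
Proof.
have /andP[ux0 _] := u01 x; have := envelope_ge x.
have : envelope x <= 1.
  apply: envelope_le => y; have := mdist_ge0 x y.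
  by have /andP[_ uy1] := u01 y; lra.
by move=> ? ?; apply/andP; split; lra.
Qed.

Lemma envelope_lipschitz (x x' : X) : `|envelope x - envelope x'| <= mdist x x'.
Proof.
suff env_le a b : envelope a <= envelope b + mdist a b.
  rewrite ler_norml; have := env_le x x'; have := env_le x' x.
  by rewrite metric_sym; lra.
apply: envelope_le => y.
have := metric_triangle b a y; rewrite (metric_sym b a).
have := sup_upper_bound (envelope_has_sup b) (ex_intro2 _ _ y I erefl).
rewrite /envelope; lra.
Qed.

(* If [u] varies by at most [c] on the unit ball around [x], the envelope
   exceeds [u] by at most [c] at [x]: farther points contribute negatively. *)
Lemma envelope_local (x : X) (c : R) : 0 <= c ->
  (forall y, mdist x y <= 1 -> u y <= u x + c) -> envelope x <= u x + c.
Proof.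
move=> c0 uc; apply: envelope_le => y.
have := mdist_ge0 x y; have /andP[ux0 _] := u01 x; have /andP[_ uy1] := u01 y.
have [/uc|] := leP (mdist x y) 1; lra.
Qed.

(* A glacially oscillating [u] is asymptotic to its envelope: away from the
   unit neighbourhood of a bounded [K i] with [n i >= 1], every point of the
   unit ball around [x] is one chain step from [x]. *)
Lemma envelope_asymptotic : glacially_oscillating u -> asymptotic envelope u.
Proof.
move=> gu e e0; have e2 : 0 < e / 2 by rewrite divr_gt0.
have [K [n [[Kb Ks] Kc]]] := gu _ e2.
have [i [_ n1]] := Ks _ _ (mbounded0 X) ltr01.
apply: mboundedS (mbounded_thicken 1 (Kb i)) => x /= ex.
have [//|farx] := pselect (exists2 y, K i y & mdist x y <= 1).
have : envelope x <= u x + e / 2.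
  apply: (@envelope_local x (e / 2) (ltW e2)) => y dxy.
  have Kx : ~ K i x by move=> Kx; apply: farx; exists x; rewrite ?mdistxx.
  have Ky : ~ K i y by move=> Ky; apply: farx; exists y.
  have chain : scale_chain K n x [:: y].
    by split=> //; exists i; do 2!split=> //; apply: (le_trans dxy (ltW n1)).
  have := Kc _ _ chain; rewrite /= distrC => /ltW; rewrite ler_norml; lra.
by move: ex; rewrite ger0_norm ?subr_ge0 ?envelope_ge //; lra.
Qed.

Lemma envelope_cgo : glacially_oscillating u -> cgo_fun envelope.
Proof.
move=> gu; split; first exact: lipschitz_continuous envelope_lipschitz.
split; first exact: envelope_01.
exact: glacially_oscillating_asymptotic gu (envelope_asymptotic gu).
Qed.

End lipschitz_envelope.

Lemma cgo_asymptotic (R : realType) (X : metricType R) (u : X -> R) :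
  (forall x, 0 <= u x <= 1) -> glacially_oscillating u ->
  exists h : CGO X, asymptotic (sval h) u.
Proof.
move=> u01 gu; exists (exist _ (envelope u) (envelope_cgo u01 gu)).
exact: envelope_asymptotic.
Qed.

(* A bump function at [z]: the envelope of the indicator of [z] equals [1]
   at [z] and vanishes outside the open unit ball around [z]. *)
Lemma cgo_bump (R : realType) (X : metricType R) (z : X) :
  exists phi : CGO X, sval phi z = 1 /\
    forall y, 1 <= mdist z y -> sval phi y = 0.
Proof.
pose u : X -> R := \1_[set z].
have uz : u z = 1 by rewrite /u indicE mem_set.
have uy y : y <> z -> u y = 0 by move=> yz; rewrite /u indicE memNset.
have u01 x : 0 <= u x <= 1.
  by have [->|/uy ->] := pselect (x = z); rewrite ?uz ?ler01 ?lexx.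
have gu : glacially_oscillating u.
  apply: (glacially_oscillating_asymptotic (glacially_oscillating_cst z 0)).
  move=> e e0; apply: (@mboundedS _ _ _ [set z]).
    move=> x /=; have [//|/uy ->] := pselect (x = z).
    by rewrite subr0 normr0 leNgt e0.
  by exists 0 => x y -> ->; rewrite mdistxx.
exists (exist _ (envelope u) (envelope_cgo u01 gu)) => /=; split.
  by apply/le_anti; rewrite (andP (envelope_01 u01 z)).2 -{1}uz envelope_ge.
move=> y zy; apply/le_anti; rewrite (andP (envelope_01 u01 y)).1 andbT.
apply: envelope_le => // w; have := mdist_ge0 y w.
have [->|/uy ->] := pselect (w = z); last by lra.
by rewrite uz metric_sym; lra.
Qed.

Section pointwise_topology.
Variable R : realType.

Lemma ptws_cvgP (I : Type) (F : set_system {ptws I -> R}) (f : {ptws I -> R}) :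
  Filter F -> F --> f <-> forall i, (fun g => g i) @ F --> f i.
Proof.
move=> FF; rewrite (@cvg_sup _ _ (fun i => Topological.class
    (initial_topology (fun g : I -> R => g i))) F f FF).
have surj i : (fun g : I -> R => g i) @` setT = setT.
  by apply/seteqP; split => // r _; exists (fun _ => r).
have imgE i := @cvg_image _ _ _ F f FF (surj i).
split=> Hcvg i.
  move: (Hcvg i); rewrite imgE => cvgi B /cvgi [A FA AB].
  have sA : A `<=` (fun g : I -> R => g i) @^-1` B.
    by move=> g Ag; rewrite -AB; exists g.
  exact: (filterS sA FA).
apply/imgE => B /(Hcvg i) FB; exists ((fun g : I -> R => g i) @^-1` B) => //.
exact: image_preimage.
Qed.

Lemma ptws_hausdorff (I : Type) : hausdorff_space {ptws I -> R}.
Proof.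
move=> p q; rewrite cluster_cvgE /= => -[G PG [Gq Gp]].
apply: functional_extensionality_dep => i.
have FG := @filter_filter _ _ PG.
exact: (cvg_unique (@Rhausdorff R) ((ptws_cvgP p FG).1 Gp i)
                                   ((ptws_cvgP q FG).1 Gq i)).
Qed.

Lemma cf_embed_continuous (X : metricType R) : continuous (@cf_embed R X).
Proof.
by move=> x; apply/ptws_cvgP => phi; exact: (proj1 (proj2_sig phi) x).
Qed.

End pointwise_topology.

Section corona_filter.
Variables (R : realType) (X : metricType R).
Implicit Types (p : {ptws CGO X -> R}) (B : set X).

(* By properness, every neighbourhood of a corona point contains the image of
   points outside any given bounded set [B]: otherwise the point would lie in
   the compact image of a closed ball containing [B], hence in the image. *)
Lemma corona_escape p N B : proper_metric X -> CF_corona X p -> nbhs p N ->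
  mbounded B -> exists x, N (cf_embed x) /\ ~ B x.
Proof.
move=> pX [clp nimp] Np bB; have [_ [[x1 _ <-] _]] := clp N Np.
have [r Br] := (mbounded_ballP x1 B).1 bB.
pose closed_ball := [set y | mdist x1 y <= r].
have cball : compact (@cf_embed R X @` closed_ball).
  apply: continuous_compact; last exact: pX.
  exact: continuous_subspaceT (@cf_embed_continuous _ X).
have [//|noesc] := pselect (exists x, N (cf_embed x) /\ ~ B x).
suff [y _ yp] : (@cf_embed R X @` closed_ball) p by case: nimp; exists y.
apply: (compact_closed (@ptws_hausdorff _ _) cball) => M Mp.
have [_ [[x _ <-] [Nx Mx]]] := clp _ (filterI Np Mp).
have [Bx|nBx] := pselect (B x); last by case: noesc; exists x.
by exists (cf_embed x); split => //; exists x => //; exact: Br.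
Qed.

Definition corona_filter p : set_system X :=
  fun A => exists N, nbhs p N /\ exists B, mbounded B /\
    (forall x, N (cf_embed x) -> ~ B x -> A x).

Lemma corona_filter_filter p : Filter (corona_filter p).
Proof.
apply: Build_Filter.
- exists setT; split; first exact: filterT.
  by exists set0; split; [exact: mbounded0|].
- move=> A1 A2 [N1 [N1p [B1 [bB1 H1]]]] [N2 [N2p [B2 [bB2 H2]]]].
  exists (N1 `&` N2); split; first exact: filterI.
  exists (B1 `|` B2); split; first exact: mboundedU.
  by move=> x [n1 n2] nB; split; [apply: H1|apply: H2] => // ?; apply: nB;
    [left|right].
- move=> A1 A2 A12 [N [Np [B [bB H]]]]; exists N; split => //.
  by exists B; split => // x n nb; apply/A12/H.
Qed.

Lemma corona_filter_proper p : proper_metric X -> CF_corona X p ->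
  ProperFilter (corona_filter p).
Proof.
move=> pX cp; apply: Build_ProperFilter_ex; last exact: corona_filter_filter.
move=> A [N [Np [B [bB H]]]]; have [x [Nx nBx]] := corona_escape pX cp Np bB.
by exists x; apply: H.
Qed.

Lemma corona_filter_cobounded p B : mbounded B -> corona_filter p (~` B).
Proof. by move=> bB; exists setT; split; [exact: filterT|exists B]. Qed.

Lemma corona_filter_cvg p (phi : CGO X) : sval phi @ corona_filter p --> p phi.
Proof.
move=> V Vp; exists ((fun g => g phi) @^-1` V); split.
  exact: ((ptws_cvgP p (@nbhs_filter _ p)).1 (@cvg_id _ (nbhs p)) phi _ Vp).
by exists set0; split; [exact: mbounded0|].
Qed.

(* Conversely, a pointwise limit along a proper filter leaving every bounded
   set is a corona point; bump functions exclude the points of [X]. *)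
Lemma corona_of_filter (G : set_system X) p : ProperFilter G ->
  (forall B, mbounded B -> G (~` B)) ->
  (forall phi : CGO X, sval phi @ G --> p phi) -> CF_corona X p.
Proof.
move=> PG Gcob Gcvg; split.
  move=> N Np; have embG : @cf_embed R X @ G --> p by apply/ptws_cvgP.
  have GN : G (@cf_embed R X @^-1` N) := embG _ Np.
  have [y Ny] := filter_ex GN.
  by exists (cf_embed y); split => //; exists y.
move=> [z _ pz]; have [phi [phi1 phi0]] := cgo_bump z.
have cvg1 : sval phi @ G --> (1 : R).
  by have := Gcvg phi; rewrite -pz /cf_embed phi1.
have cvg0 : sval phi @ G --> (0 : R).
  apply: cvg_near_cst; have bz : mbounded [set y | mdist z y < 1].
    by apply/(mbounded_ballP z); exists 1 => y /= /ltW.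
  by apply: filterS (Gcob _ bz) => y /= /negP; rewrite -leNgt; exact: phi0.
have one0 : (1 : R) = 0 := cvg_unique (@Rhausdorff R) cvg1 cvg0.
by have := @oner_eq0 R; rewrite one0 eqxx.
Qed.

End corona_filter.

Section corona_transfer.
Variable R : realType.

Definition cgo_pullback (X Y : metricType R) (f : X -> Y)
    (H : CGO Y -> CGO X) : Prop :=
  forall phi, asymptotic (sval (H phi)) (sval phi \o f).

Lemma cgo_pullback_exists (X Y : metricType R) (f : X -> Y) :
  coarse_map f -> ls_continuous f -> exists H, cgo_pullback f H.
Proof.
move=> cf lf; suff /choice[H HP] : forall phi : CGO Y,
    exists h : CGO X, asymptotic (sval h) (sval phi \o f) by exists H.
move=> phi; have [_ [phi01 gphi]] := proj2_sig phi.
apply: cgo_asymptotic; first by move=> x; exact: phi01.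
exact: glacially_oscillating_comp cf lf gphi.
Qed.

Definition corona_map (X Y : metricType R) (H : CGO Y -> CGO X)
    (q : {ptws CGO X -> R}) : {ptws CGO Y -> R} :=
  fun phi => q (H phi).

Lemma corona_map_continuous (X Y : metricType R) (H : CGO Y -> CGO X) :
  continuous (corona_map H).
Proof.
move=> q; have qcvg := (@ptws_cvgP _ (CGO X) (nbhs q) q (@nbhs_filter _ q)).1
  (@cvg_id _ (nbhs q)).
apply: (proj2 (@ptws_cvgP _ (CGO Y) (corona_map H @ nbhs q) (corona_map H q)
  _)).
by move=> phi; exact: qcvg (H phi).
Qed.

(* A pullback along a coarse map sends corona points to corona points: the
   image of [p] is the limit along the pushforward of [corona_filter p]. *)
Lemma corona_map_corona (X Y : metricType R) (f : X -> Y) (H : CGO Y -> CGO X)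
    (p : {ptws CGO X -> R}) :
  proper_metric X -> coarse_map f -> cgo_pullback f H ->
  CF_corona X p -> CF_corona Y (corona_map H p).
Proof.
move=> pX cf Hf cp; have PF := corona_filter_proper pX cp.
apply: (@corona_of_filter _ _ (f @ corona_filter p)).
- by move=> B bB; exact: (corona_filter_cobounded p (cf _ bB)).
- move=> phi; change ((sval phi \o f) @ corona_filter p --> p (H phi)).
  exact: (asymptotic_cvg (corona_filter_filter p)
    (@corona_filter_cobounded _ _ p) (Hf phi)
    (@corona_filter_cvg _ _ p (H phi))).
Qed.

Lemma corona_map_inverse (X Y : metricType R) (f : X -> Y) (g : Y -> X)
    (Hf : CGO Y -> CGO X) (Hg : CGO X -> CGO Y) (p : {ptws CGO X -> R}) :
  proper_metric X -> coarse_map f -> coarse_map g ->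
  close_maps (g \o f) idfun -> cgo_pullback f Hf -> cgo_pullback g Hg ->
  CF_corona X p -> corona_map Hg (corona_map Hf p) = p.
Proof.
move=> pX cf cg gf_id HfP HgP cp; have PF := corona_filter_proper pX cp.
apply: functional_extensionality_dep => psi; rewrite /corona_map.
have psi_gf : asymptotic (sval psi \o g \o f) (sval psi).
  exact: close_asymptotic (proj2 (proj2 (proj2_sig psi))) (coarse_comp cf cg)
    gf_id.
have HfHg : asymptotic (sval (Hf (Hg psi))) (sval psi).
  apply: asymptotic_trans (asymptotic_trans (HfP (Hg psi)) _) psi_gf.
  exact: asymptotic_comp cf (HgP psi).
apply: (cvg_unique (@Rhausdorff R) _ (@corona_filter_cvg _ _ p psi)).
exact: (asymptotic_cvg (corona_filter_filter p)
  (@corona_filter_cobounded _ _ p) HfHg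
  (@corona_filter_cvg _ _ p (Hf (Hg psi)))).
Qed.

End corona_transfer.

Theorem proposition4p6 (R : realType) (X Y : metricType R) :
  proper_metric X -> proper_metric Y -> coarsely_equivalent X Y ->
  homeomorphic_sets (CF_corona X) (CF_corona Y).
Proof.
move=> pX pY [f [g [[cf lf cg lg] [gf_id fg_id]]]].
have [Hf HfP] := cgo_pullback_exists cf lf.
have [Hg HgP] := cgo_pullback_exists cg lg.
exists (corona_map Hf), (corona_map Hg); split; [split|split].
- by move=> _ [p cp <-]; exact: corona_map_corona pX cf HfP cp.
- by move=> _ [q cq <-]; exact: corona_map_corona pY cg HgP cq.
- move=> p; rewrite inE => cp.
  exact: corona_map_inverse pX cf cg gf_id HfP HgP cp.
- move=> q; rewrite inE => cq.
  exact: corona_map_inverse pY cg cf fg_id HgP HfP cq.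
- exact: (@continuous_subspaceT _ _ (CF_corona X) (corona_map Hf)
    (@corona_map_continuous _ X Y Hf)).
- exact: (@continuous_subspaceT _ _ (CF_corona Y) (corona_map Hg)
    (@corona_map_continuous _ Y X Hg)).
Qed.
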